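(* For every $k\ge 3$, $\left\lceil \binom{2k}{2}_2 \big/ \binom{k}{2}_2\right\rceil = 2^{2k}+3\cdot 2^k+5$, and $$\lim_{k\to\infty}\frac{\mathcal{C}_2(2k,k,2)}{\left\lceil \binom{2k}{2}_2 / \binom{k}{2}_2\right\rceil}=1.$$
   Context: $\binom{n}{k}_q=\frac{(q^n-1)(q^{n-1}-1)\cdots(q^{n-k+1}-1)}{(q^k-1)(q^{k-1}-1)\cdots(q-1)}$ is the Gaussian coefficient (number of $k$-dimensional subspaces of $\mathbb{F}_q^n$). $\mathcal{C}_q(n,k,r)$ is the minimum number of $k$-dimensional subspaces of $\mathbb{F}_q^n$ such that every $r$-dimensional subspace of $\mathbb{F}_q^n$ is contained in at least one of them. *)

From HB Require Import structures.
From mathcomp Require Import all_boot all_order all_algebra all_field.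
Set Implicit Arguments. Unset Strict Implicit. Unset Printing Implicit Defensive.
Import Order.TTheory GRing.Theory Num.Theory.

Local Open Scope ring_scope.

Definition gauss (q n k : nat) : rat :=
  (\prod_(i < k) ((q ^ (n - i))%N%:R - 1)) / (\prod_(i < k) ((q ^ (k - i))%N%:R - 1)).

(* Subspaces of F^n are represented canonically by n x n matrices A with
   <<A>> = A (the canonical generator of their row space); the row space of A
   is the subspace. *)
Definition is_subspace (F : fieldType) (n d : nat) (A : 'M[F]_n) : bool :=
  ((<<A>>%MS == A) && (\rank A == d))%N.

Definition is_covering (F : finFieldType) (n k r : nat) (S : {set 'M[F]_n}) : bool :=
  [forall A in S, is_subspace k A] &&
  [forall W : 'M[F]_n, is_subspace r W ==> [exists A in S, (W <= A)%MS]].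

(* C_F(n,k,r): minimum size of a covering (default value #|{set 'M_n}| if no
   covering exists, which never happens for r <= k <= n). *)
Definition covering_number (F : finFieldType) (n k r : nat) : nat :=
  \big[minn/#|{: {set 'M[F]_n}}|]_(S : {set 'M[F]_n} | is_covering k r S) #|S|.

From HB Require Import structures.
From mathcomp Require Import all_boot all_order all_algebra all_field.
From mathcomp Require Import ring lra zify.
Import Order.TTheory GRing.Theory Num.Theory.
Import VectorInternalTheory.
Set Implicit Arguments. Unset Strict Implicit.
Local Open Scope ring_scope.

(* The first claim is a computation: with Y = 2^(k-1) the ratio of Gaussian
   coefficients is 4Y^2 + 6Y + 4 + 3/(Y-1), where 0 < 3/(Y-1) <= 1.

   The limit follows from the sandwich L(k) <= C_2(2k, k, 2) <= 2^(2k) + 6 * 2^k,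
   which gives |C_2(2k, k, 2)/L(k) - 1| < 3/2^k.
   - Lower bound (over any finite field F_q): double counting ordered pairs of
     independent vectors shows (q^n - 1)(q^n - q) <= |S| (q^k - 1)(q^k - q)
     for every covering S; for q = 2, n = 2k this rounds up to L(k).
   - Upper bound: a family of subspaces of dimension <= k in which every pair of
     vectors lies in a common member yields a covering of no larger size (each
     member is enlarged to dimension k).  In F_2^(2k) = F_2^k x F_2^k such a
     family is given by the graphs of the 2^(2k) F_2-linear maps x |-> a x + b x^2
     of the field F_(2^k) = F_2^k, which send any two distinct nonzero points
     anywhere, together with 6 * 2^k "extra" spaces for the pairs whose first
     halves are linearly dependent. *)

Lemma gauss_2_2 n : gauss 2 n 2 = ((2 ^ n)%N%:R - 1) * ((2 ^ (n - 1))%N%:R - 1) / 3.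
Proof. by rewrite /gauss !big_ord_recl !big_ord0 /= subn0 !mulr1. Qed.

Lemma gauss_ratio_split (R : realFieldType) (Y : R) : 4 <= Y ->
  (4 * Y * Y - 1) * (2 * Y * Y - 1) / 3 / ((2 * Y - 1) * (Y - 1) / 3)
    = 4 * Y * Y + 6 * Y + 4 + 3 / (Y - 1).
Proof. by move=> Y_ge4; field; apply/andP; split; apply/eqP => h; lra. Qed.

(* First claim: for Y >= 4 the fractional part 3/(Y-1) lies in (0, 1], so the
   ceiling is 4Y^2 + 6Y + 5 = 2^(2k) + 3 * 2^k + 5. *)
Lemma ceil_gauss_ratio k : (3 <= k)%N ->
  Num.ceil (gauss 2 (2 * k) 2 / gauss 2 k 2) = ((2 ^ (2 * k) + 3 * 2 ^ k + 5)%N)%:Z.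
Proof.
case: k => [//|j] k_ge3; set y := (2 ^ j)%N.
have y_ge4 : (4 <= y)%N by apply: (@leq_pexp2l 2 2 j) => //; lia.
have e1 : (2 ^ j.+1 = 2 * y)%N by rewrite expnS.
have e2 : (2 ^ (2 * j.+1) = 4 * y * y)%N.
  by rewrite (_ : 2 * j.+1 = 2 + j + j)%N ?expnD ?mulnA //; lia.
have e3 : (2 ^ (2 * j.+1 - 1) = 2 * y * y)%N.
  by rewrite (_ : 2 * j.+1 - 1 = 1 + j + j)%N ?expnD ?mulnA //; lia.
rewrite !gauss_2_2 e1 e2 e3 subn1 /= -/y !natrM gauss_ratio_split ?ler_nat //.
have Y_ge4 : 4 <= y%:R :> rat by rewrite ler_nat.
have frac_gt0 : 0 < 3 / (y%:R - 1) :> rat by apply: divr_gt0; lra.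
have frac_le1 : 3 / (y%:R - 1) <= 1 :> rat by rewrite ler_pdivrMr; lra.
apply: ceil_def; rewrite intrB -!pmulrn !natrD !natrM; apply/andP; split; lra.
Qed.

Section IndependentPairs.
Variable F : finFieldType.

Lemma card_row_space n m (A : 'M[F]_(m, n)) :
  #|[set v : 'rV[F]_n | (v <= A)%MS]| = (#|F| ^ \rank A)%N.
Proof.
pose f (z : 'rV[F]_(\rank A)) := z *m row_base A.
have f_inj : injective f.
  have /row_freeP [B hB] := row_base_free A.
  by apply: (can_inj (g := fun v => v *m B)) => z; rewrite /f -mulmxA hB mulmx1.
have -> : [set v : 'rV[F]_n | (v <= A)%MS] = f @: setT.
  apply/setP => v; rewrite inE; apply/idP/imsetP.
    by rewrite -(eq_row_base A) => /submxP [D ->]; exists D.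
  by move=> [z _ ->]; rewrite /f -(eq_row_base A) submxMl.
by rewrite card_imset // cardsT card_mx mul1n.
Qed.

Definition indep_pairs n m (A : 'M[F]_(m, n)) : {set 'rV[F]_n * 'rV[F]_n} :=
  [set p | ((p.1 <= A)%MS && (p.1 != 0)) && ((p.2 <= A)%MS && ~~ (p.2 <= p.1)%MS)].

Lemma card_indep_pairs n m (A : 'M[F]_(m, n)) :
  #|indep_pairs A| = ((#|F| ^ \rank A - 1) * (#|F| ^ \rank A - #|F|))%N.
Proof.
have row_spaceS (u : 'rV[F]_n) : (u <= A)%MS ->
    [set v | (v <= u)%MS] \subset [set v : 'rV[F]_n | (v <= A)%MS].
  by move=> uA; apply/subsetP => v; rewrite !inE => /submx_trans; apply.
rewrite /indep_pairs -sum1dep_card.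
rewrite -(pair_big_dep (fun u => (u <= A)%MS && (u != 0))
   (fun u v => (v <= A)%MS && ~~ (v <= u)%MS) (fun _ _ => 1%N)) /=.
rewrite (eq_bigr (fun _ => (#|F| ^ \rank A - #|F|)%N)); last first.
  move=> u /andP [uA u_nz]; rewrite sum1dep_card.
  have -> : [set v | (v <= A)%MS && ~~ (v <= u)%MS] =
            [set v : 'rV[F]_n | (v <= A)%MS] :\: [set v | (v <= u)%MS].
    by apply/setP => v; rewrite !inE andbC.
  by rewrite cardsD (setIidPr (row_spaceS u uA)) !card_row_space rank_rV u_nz expn1.
rewrite sum_nat_cond_const; congr (_ * _)%N.
have -> : [set u | (u <= A)%MS && (u != 0)] = [set v : 'rV[F]_n | (v <= A)%MS] :\ 0.
  by apply/setP => v; rewrite !inE andbC.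
have := cardsD1 0 [set v : 'rV[F]_n | (v <= A)%MS].
by rewrite inE sub0mx card_row_space => ->; rewrite add1n subn1.
Qed.

Lemma rank_span_indep_pair n (u v : 'rV[F]_n) :
  u != 0 -> ~~ (v <= u)%MS -> \rank <<col_mx u v>>%MS = 2%N.
Proof.
move=> u_nz v_notin_u; rewrite mxrank_gen -addsmxE.
have rank_lt : (\rank u < \rank (u + v)%MS)%N.
  by apply: rank_ltmx; rewrite ltmxE addsmxSl /= addsmx_sub negb_and v_notin_u orbT.
have [rank_le _] := mxrank_adds_leqif u v.
move: rank_lt rank_le; rewrite !rank_rV u_nz; case: (v != 0) => /= ? ?; lia.
Qed.

Lemma covering_indep_pair n k (S : {set 'M[F]_n}) (p : 'rV[F]_n * 'rV[F]_n) :
  is_covering k 2 S -> p \in indep_pairs 1%:M -> exists2 A, A \in S & p \in indep_pairs A.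
Proof.
case/andP=> _ /forallP covS; case: p => u v.
rewrite inE /= => /andP [/andP [_ u_nz] /andP [_ v_notin_u]].
pose W := <<col_mx u v>>%MS.
have := covS W; rewrite /is_subspace genmx_id eqxx rank_span_indep_pair //=.
case/existsP => A /andP [A_in_S W_sub_A]; exists A => //.
have u_in_W : (u <= W)%MS by rewrite genmxE -addsmxE addsmxSl.
have v_in_W : (v <= W)%MS by rewrite genmxE -addsmxE addsmxSr.
by rewrite inE /= (submx_trans u_in_W W_sub_A) (submx_trans v_in_W W_sub_A) u_nz.
Qed.

(* Double counting of independent pairs: a covering S of the planes of F_q^n by
   k-spaces satisfies (q^n - 1)(q^n - q) <= |S| (q^k - 1)(q^k - q). *)
Lemma covering_pair_count n k (S : {set 'M[F]_n}) : is_covering k 2 S ->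
  (((#|F| ^ n - 1) * (#|F| ^ n - #|F|)) <=
     #|S| * ((#|F| ^ k - 1) * (#|F| ^ k - #|F|)))%N.
Proof.
move=> covS; have /andP [/forall_inP S_dim _] := covS.
have := card_indep_pairs (1%:M : 'M[F]_n); rewrite mxrank1 => <-.
set P := indep_pairs (1%:M : 'M[F]_n).
apply: (@leq_trans (\sum_(p in P) \sum_(A in S) (p \in indep_pairs A : nat))).
  rewrite -sum1_card; apply: leq_sum => p p_in_P.
  have [A A_in_S pA] := covering_indep_pair covS p_in_P.
  by rewrite (bigD1 A) //= pA.
rewrite exchange_big /= -sum_nat_const; apply: leq_sum => A A_in_S.
have /andP [_ /eqP <-] := S_dim A A_in_S.
rewrite -card_indep_pairs -sum1_card [X in (_ <= X)%N]big_mkcond /=.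
apply: (@leq_trans (\sum_p (p \in indep_pairs A : nat))).
  by rewrite [X in (_ <= X)%N](bigID (mem P)) /= leq_addr.
by apply: eq_leq; apply: eq_bigr => p _; case: (p \in indep_pairs A).
Qed.

End IndependentPairs.

Section CoveringFromPairs.
Variable F : finFieldType.

Lemma extend_to_subspace n k (A : 'M[F]_n) : (\rank A <= k)%N -> (k <= n)%N ->
  exists B : 'M[F]_n, (A <= B)%MS && is_subspace k B.
Proof.
move=> rankA k_le_n; move d_def: (k - \rank A)%N => d.
elim: d A rankA d_def => [|d IH] A rankA d_def.
  exists <<A>>%MS; rewrite genmxE submx_refl /is_subspace genmx_id eqxx mxrank_gen /=.
  by apply/eqP; lia.
have [/existsP [v v_notin_A] | /existsPn A_full] := boolP [exists v : 'rV[F]_n, ~~ (v <= A)%MS].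
  have rank_lt : (\rank A < \rank (A + v)%MS)%N.
    by apply: rank_ltmx; rewrite ltmxE addsmxSl /= addsmx_sub negb_and v_notin_A orbT.
  have rank_le : (\rank (A + v)%MS <= \rank A + 1)%N.
    have [le _] := mxrank_adds_leqif A v.
    by apply: (leq_trans le); rewrite leq_add2l rank_rV; case: (v != 0).
  have [B /andP [AvB B_sub]] := IH (A + v)%MS ltac:(lia) ltac:(lia).
  by exists B; rewrite B_sub andbT (submx_trans (addsmxSl A v) AvB).
have : (1%:M <= A)%MS by apply/row_subP => i; have := A_full (row i 1%:M); rewrite negbK.
by move/mxrankS; rewrite mxrank1 => n_le_rankA; lia.
Qed.

Lemma pair_cover_planes n (Fam : {set 'M[F]_n}) :
  (forall w1 w2 : 'rV[F]_n, exists2 A, A \in Fam & (w1 <= A)%MS && (w2 <= A)%MS) ->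
  forall W : 'M[F]_n, \rank W = 2%N -> exists2 A, A \in Fam & (W <= A)%MS.
Proof.
move=> pair_cov W rankW.
have r0 : (0 < \rank W)%N by rewrite rankW.
have r1 : (1 < \rank W)%N by rewrite rankW.
have [A A_in /andP [a0 a1]] :=
  pair_cov (row (Ordinal r0) (row_base W)) (row (Ordinal r1) (row_base W)).
exists A => //; rewrite -(eq_row_base W); apply/row_subP => i.
have : (i : nat) = 0%N \/ (i : nat) = 1%N by case: i => [[|[|?]]] /=; rewrite rankW; auto.
by case=> i_val; [rewrite (_ : i = Ordinal r0) // | rewrite (_ : i = Ordinal r1) //];
  apply: val_inj.
Qed.

Lemma bigmin_le_nat (T : finType) (P : pred T) (f : T -> nat) d x :
  P x -> (\big[minn/d]_(y | P y) f y <= f x)%N.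
Proof.
move=> Px; have : x \in index_enum T by rewrite mem_index_enum.
elim: (index_enum T) => [|y s IH] //; rewrite big_cons inE.
case/orP => [/eqP <- | x_in_s]; first by rewrite Px geq_minl.
by case: (P y); rewrite ?geq_min IH ?orbT.
Qed.

Lemma le_bigmin_nat (T : finType) (P : pred T) (f : T -> nat) d b :
  (b <= d)%N -> (forall y, P y -> b <= f y)%N -> (b <= \big[minn/d]_(y | P y) f y)%N.
Proof.
move=> b_le_d b_le_f; apply: (big_ind (fun x => b <= x)%N) => // x y bx by_.
by rewrite leq_min bx by_.
Qed.

(* Upper-bound principle: a family of subspaces of rank <= k such that every
   pair of vectors lies in a common member bounds C(n, k, 2) by its size, since
   enlarging each member to a k-subspace yields a covering. *)
Lemma covering_number_le_pair_cover n k (Fam : {set 'M[F]_n}) : (k <= n)%N ->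
  (forall A, A \in Fam -> \rank A <= k)%N ->
  (forall w1 w2 : 'rV[F]_n, exists2 A, A \in Fam & (w1 <= A)%MS && (w2 <= A)%MS) ->
  (covering_number F n k 2 <= #|Fam|)%N.
Proof.
move=> k_le_n Fam_rank pair_cov.
pose ext (A : 'M[F]_n) := odflt A [pick B | (A <= B)%MS && is_subspace k B].
have ext_spec A : A \in Fam -> (A <= ext A)%MS && is_subspace k (ext A).
  move=> A_in; rewrite /ext; case: pickP => [B HB | no_ext] //=.
  have [B HB] := extend_to_subspace (Fam_rank A A_in) k_le_n.
  by rewrite no_ext in HB.
have cov : is_covering k 2 (ext @: Fam).
  apply/andP; split.
    by apply/forall_inP => B /imsetP [A A_in ->]; case/andP: (ext_spec A A_in).
  apply/forallP => W; apply/implyP => /andP [_ /eqP rankW].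
  have [A A_in W_sub_A] := pair_cover_planes pair_cov rankW.
  have /andP [A_sub_ext _] := ext_spec A A_in.
  by apply/existsP; exists (ext A); rewrite imset_f //= (submx_trans W_sub_A).
exact: leq_trans (bigmin_le_nat (fun S : {set _} => #|S|) _ cov) (leq_imset_card _ _).
Qed.

End CoveringFromPairs.

Lemma F2_cases (c : 'F_2) : c = 0 \/ c = 1.
Proof. by case: c => [[|[|]]] // i; [left | right]; apply/val_inj. Qed.

Lemma F2_sqr (c : 'F_2) : c ^+ 2 = c.
Proof. by case: (F2_cases c) => ->; rewrite ?expr0n ?expr1n. Qed.

Lemma quad_map_inj (K : fieldType) (r1 r2 a b a' b' : K) :
  r1 != 0 -> r2 != 0 -> r1 != r2 ->
  a * r1 + b * r1 ^+ 2 = a' * r1 + b' * r1 ^+ 2 ->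
  a * r2 + b * r2 ^+ 2 = a' * r2 + b' * r2 ^+ 2 -> a = a' /\ b = b'.
Proof.
move=> r1_nz r2_nz r12 e1 e2.
have root (r : K) : r != 0 -> a * r + b * r ^+ 2 = a' * r + b' * r ^+ 2 ->
    (a - a') + (b - b') * r = 0.
  move=> r_nz e; have /eqP : r * ((a - a') + (b - b') * r) = 0.
    have -> : r * ((a - a') + (b - b') * r)
      = (a * r + b * r ^+ 2) - (a' * r + b' * r ^+ 2) by ring.
    by rewrite e subrr.
  by rewrite mulf_eq0 (negbTE r_nz) => /eqP.
have E1 := root r1 r1_nz e1; have E2 := root r2 r2_nz e2.
have /eqP : (b - b') * (r1 - r2) = 0.
  have -> : (b - b') * (r1 - r2)
    = ((a - a') + (b - b') * r1) - ((a - a') + (b - b') * r2) by ring.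
  by rewrite E1 E2 subrr.
rewrite mulf_eq0 [r1 - r2 == 0]subr_eq0 (negbTE r12) orbF subr_eq0 => /eqP eb.
by move: E1; rewrite eb subrr mul0r addr0 => /eqP; rewrite subr_eq0 => /eqP.
Qed.

(* Let F be a finite field of characteristic 2, seen as the F_2-space F_2^m.
   The F_2-linear maps x |-> a x + b x^2 (a, b in F) send any two distinct
   nonzero vectors to any two prescribed vectors. *)
Section QuadraticMaps.
Variables (F : finFieldType) (char2 : (2%N \in [pchar F])%R).
Let V := pPrimeCharType char2.
Let m := dim V.

Definition quad_map (a b : V) (x : 'rV['F_2]_m) : 'rV['F_2]_m :=
  @v2r _ V (a * @r2v _ V x + b * (@r2v _ V x) ^+ 2).

Lemma quad_map_is_additive a b : {morph quad_map a b : x y / x + y}.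
Proof.
move=> x y; rewrite /quad_map -(linearD (@v2r _ V)) /= (linearD (@r2v _ V)) /=.
  congr (@v2r _ V _).
have frobenius (u v : V) : (u + v) ^+ 2 = u ^+ 2 + v ^+ 2.
  by rewrite sqrrD -mulr_natl (pcharf0 char2) mul0r addr0.
by rewrite frobenius; ring.
Qed.

Lemma quad_map_is_scalable a b (c : 'F_2) x : quad_map a b (c *: x) = c *: quad_map a b x.
Proof.
rewrite /quad_map linearZ /= exprZn F2_sqr -!scalerAr -scalerDr.
by rewrite linearZ.
Qed.

Definition quad_mx (a b : V) : 'M['F_2]_m := \matrix_(i < m) quad_map a b (delta_mx 0 i).

Lemma mul_quad_mx a b (x : 'rV['F_2]_m) : x *m quad_mx a b = quad_map a b x.
Proof.
have quad_map0 : quad_map a b 0 = 0.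
  by rewrite /quad_map linear0 mulr0 expr0n /= mulr0 addr0 linear0.
rewrite mulmx_sum_row {2}(row_sum_delta x).
rewrite (big_morph (quad_map a b) (quad_map_is_additive a b) quad_map0).
by apply: eq_bigr => i _; rewrite rowK quad_map_is_scalable.
Qed.

Lemma card_quad_space : #|V| = (2 ^ m)%N.
Proof. by rewrite /m -dimvf (pprimeChar_dimf char2); exact: (card_pprimeChar char2). Qed.

Lemma quad_mx_interpolates (x1 x2 y1 y2 : 'rV['F_2]_m) : x1 != 0 -> x2 != 0 -> x1 != x2 ->
  exists p : V * V, x1 *m quad_mx p.1 p.2 = y1 /\ x2 *m quad_mx p.1 p.2 = y2.
Proof.
move=> x1_nz x2_nz x12.
pose T (p : V * V) := (quad_map p.1 p.2 x1, quad_map p.1 p.2 x2).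
have r2v_nz x : x != 0 -> @r2v _ V x != 0.
  by apply: contra => /eqP e; apply/eqP; apply: (@r2v_inj _ V); rewrite e linear0.
have T_inj : injective T.
  move=> [a b] [a' b'] [/(@v2r_inj _ V) e1 /(@v2r_inj _ V) e2] /=.
  have r12 : @r2v _ V x1 != @r2v _ V x2 by apply: contra x12 => /eqP /(@r2v_inj _ V) ->.
  by have [-> ->] := quad_map_inj (r2v_nz _ x1_nz) (r2v_nz _ x2_nz) r12 e1 e2.
have card_le : (#|{: 'rV['F_2]_m * 'rV['F_2]_m}| <= #|{: V * V}|)%N.
  by rewrite !card_prod !card_mx card_quad_space card_Fp // mul1n.
have /codomP [p [-> ->]] := inj_card_onto T_inj card_le (y1, y2).
by exists p; rewrite !mul_quad_mx.
Qed.

End QuadraticMaps.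

Lemma interpolating_family k : exists G : {set 'M['F_2]_k}, (#|G| <= 2 ^ (2 * k))%N /\
  forall x1 x2 y1 y2 : 'rV['F_2]_k, x1 != 0 -> x2 != 0 -> x1 != x2 ->
    exists2 M, M \in G & (x1 *m M = y1 /\ x2 *m M = y2).
Proof.
have [-> | k_gt0] := posnP k.
  exists set0; split; first by rewrite cards0.
  by move=> x1 x2 y1 y2; rewrite [x1]thinmx0 eqxx.
have [L char2 cardL] := pPrimePowerField (isT : prime 2) k_gt0.
have dimL : dim (pPrimeCharType char2) = k.
  by apply/eqP; rewrite -(@eqn_exp2l 2) // -(card_quad_space char2) -cardL.
rewrite -dimL.
exists [set quad_mx p.1 p.2 | p : pPrimeCharType char2 * pPrimeCharType char2]; split.
  apply: (leq_trans (leq_imset_card _ _)).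
  by rewrite card_prod card_quad_space mul2n -addnn expnD.
move=> x1 x2 y1 y2 x1_nz x2_nz x12.
have [p [e1 e2]] := @quad_mx_interpolates L char2 x1 x2 y1 y2 x1_nz x2_nz x12.
by exists (quad_mx p.1 p.2); [apply: imset_f | split].
Qed.

Section ExtraSpaces.
Variables (F : fieldType) (k : nat).

Definition extra_space (u : 'rV[F]_k) (phi : 'cV[F]_k) (t : 'rV[F]_k) (c : F)
  : 'M[F]_(k, k + k) :=
  row_mx (phi *m u) (1%:M - phi *m t + c *: (phi *m t)).

Lemma extra_space_contains (u v w : 'rV[F]_k) phi t c :
  t *m phi = 1%:M -> w *m phi = 0 -> v *m phi = c%:M ->
  (row_mx u v <= extra_space u phi t c)%MS /\ (row_mx 0 w <= extra_space u phi t c)%MS.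
Proof.
move=> t_phi w_phi v_phi; split.
  apply/submxP; exists (v + t - c *: t).
  have z_phi : (v + t - c *: t) *m phi = 1%:M.
    by rewrite mulmxBl mulmxDl v_phi t_phi -scalemxAl t_phi scalemx1 addrC addKr.
  rewrite /extra_space mul_mx_row !mulmxA z_phi mul1mx mulmxDr mulmxBr mulmx1.
  rewrite -!scalemxAr !mulmxA z_phi !mul1mx.
  by congr row_mx; rewrite addrAC subrK addrK.
apply/submxP; exists w.
rewrite /extra_space mul_mx_row !mulmxA w_phi !mul0mx mulmxDr mulmxBr mulmx1.
by rewrite -!scalemxAr !mulmxA w_phi !mul0mx scaler0 subr0 addr0.
Qed.

End ExtraSpaces.

(* Over F_2 (k >= 2) the three functionals e_0, e_1, e_0 + e_1 suffice: each
   has a vector t with t phi = 1, and every w is killed by one of them. *)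
Section ThreeFunctionals.
Variables (k : nat) (k_ge2 : (1 < k)%N).
Let i0 : 'I_k := Ordinal (ltnW k_ge2).
Let i1 : 'I_k := Ordinal k_ge2.

Definition functional3 (i : 'I_3) : 'cV['F_2]_k :=
  if (i == 0 :> nat) then delta_mx i0 0 else if (i == 1 :> nat) then delta_mx i1 0
  else delta_mx i0 0 + delta_mx i1 0.

Definition unit3 (i : 'I_3) : 'rV['F_2]_k :=
  if (i == 1 :> nat) then delta_mx 0 i1 else delta_mx 0 i0.

Lemma mul_delta_col (x : 'rV['F_2]_k) j : x *m delta_mx j 0 = (x 0 j)%:M.
Proof. by rewrite -colE; apply/matrixP => a b; rewrite !ord1 !mxE eqxx mulr1n. Qed.

Lemma unit3_functional3 i : unit3 i *m functional3 i = 1%:M.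
Proof.
rewrite /unit3 /functional3; case: i => [[|[|[|]]]] //= _.
all: rewrite ?mulmxDr !mul_delta_col !mxE ?eqxx //=.
by rewrite -[0%:M]scalemx1 scale0r addr0.
Qed.

Lemma functional3_kills (w : 'rV['F_2]_k) : exists i, w *m functional3 i = 0.
Proof.
have [w0 | w0] := F2_cases (w 0 i0).
  by exists 0; rewrite /functional3 /= mul_delta_col w0 -scalemx1 scale0r.
have [w1 | w1] := F2_cases (w 0 i1).
  by exists 1; rewrite /functional3 /= mul_delta_col w1 -scalemx1 scale0r.
exists 2; rewrite /functional3 /= mulmxDr !mul_delta_col w0 w1 -scalemx1 -scalerDl.
by rewrite (_ : 1 + 1 = 0 :> 'F_2) ?scale0r //; apply/val_inj.
Qed.

End ThreeFunctionals.

Section PairCover.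
Variables (k : nat) (k_ge2 : (1 < k)%N) (G : {set 'M['F_2]_k}).
Hypothesis G_interpolates : forall x1 x2 y1 y2 : 'rV['F_2]_k,
  x1 != 0 -> x2 != 0 -> x1 != x2 -> exists2 M, M \in G & (x1 *m M = y1 /\ x2 *m M = y2).

Definition graph_spaces : {set 'M['F_2]_(k + k)} := [set <<row_mx 1%:M M>>%MS | M in G].

Definition extra_spaces : {set 'M['F_2]_(k + k)} :=
  [set <<extra_space p.1.1 (functional3 k_ge2 p.1.2) (unit3 k_ge2 p.1.2) p.2>>%MS
     | p : 'rV['F_2]_k * 'I_3 * 'F_2].

Lemma extra_spaces_cover (u v w : 'rV['F_2]_k) : exists2 A, A \in extra_spaces &
  (row_mx u v <= A)%MS && (row_mx 0 w <= A)%MS.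
Proof.
have [i w_phi] := functional3_kills k_ge2 w.
pose c := (v *m functional3 k_ge2 i) 0 0.
have [uv_in w_in] := @extra_space_contains _ _ u v w (functional3 k_ge2 i) (unit3 k_ge2 i) c
  (unit3_functional3 k_ge2 i) w_phi (mx11_scalar _).
exists <<extra_space u (functional3 k_ge2 i) (unit3 k_ge2 i) c>>%MS.
  by apply/imsetP; exists ((u, i), c).
by rewrite !genmxE uv_in w_in.
Qed.

(* Any two vectors of F_2^(k+k) lie in a common graph space or extra space:
   if their first halves are distinct and nonzero an interpolating graph
   works, otherwise an extra space does. *)
Lemma special_spaces_cover (w1 w2 : 'rV['F_2]_(k + k)) :
  exists2 A, A \in graph_spaces :|: extra_spaces & (w1 <= A)%MS && (w2 <= A)%MS.
Proof.
rewrite -(hsubmxK w1) -(hsubmxK w2).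
move: (lsubmx w1) (rsubmx w1) (lsubmx w2) (rsubmx w2) => x1 y1 x2 y2.
have in_extra A : A \in extra_spaces -> A \in graph_spaces :|: extra_spaces.
  by rewrite inE orbC => ->.
have [-> | x1_nz] := eqVneq x1 0.
  have [A A_in /andP [h1 h2]] := extra_spaces_cover x2 y2 y1.
  by exists A; [apply: in_extra | rewrite h1 h2].
have [-> | x2_nz] := eqVneq x2 0.
  have [A A_in /andP [h1 h2]] := extra_spaces_cover x1 y1 y2.
  by exists A; [apply: in_extra | rewrite h1 h2].
have [<- | x12] := eqVneq x1 x2.
  have [A A_in /andP [h1 h2]] := extra_spaces_cover x1 y1 (y2 - y1).
  exists A; first exact: in_extra.
  have -> : row_mx x1 y2 = row_mx x1 y1 + row_mx 0 (y2 - y1).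
    by rewrite add_row_mx addr0 addrC subrK.
  by rewrite h1 addmx_sub.
have [M M_in [e1 e2]] := G_interpolates y1 y2 x1_nz x2_nz x12.
exists <<row_mx 1%:M M>>%MS; first by rewrite inE imset_f.
have on_graph x : (row_mx x (x *m M) <= row_mx 1%:M M)%MS.
  by rewrite -{1}(mulmx1 x) -mul_mx_row submxMl.
by rewrite !genmxE -e1 -e2 !on_graph.
Qed.

End PairCover.

Lemma covering_number_upper k : (1 < k)%N ->
  (covering_number 'F_2 (2 * k) k 2 <= 2 ^ (2 * k) + 6 * 2 ^ k)%N.
Proof.
move=> k_ge2; have [G [card_G G_interpolates]] := interpolating_family k.
rewrite (_ : 2 * k = k + k)%N; last by lia.
apply: leq_trans (covering_number_le_pair_cover (leq_addr k k) _
  (special_spaces_cover k_ge2 G_interpolates)) _.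
  by move=> A; rewrite inE => /orP [] /imsetP [p _ ->]; rewrite mxrank_gen rank_leq_row.
apply: leq_trans (leq_card_setU _ _) _; apply: leq_add.
  by apply: leq_trans (leq_imset_card _ _) (leq_trans card_G _); rewrite mul2n addnn.
apply: leq_trans (leq_imset_card _ _) _.
rewrite !card_prod card_mx !card_ord mul1n.
have -> : (Zp_trunc (pdiv 2)).+2 = 2%N by [].
lia.
Qed.

(* For q >= 8, (q^2 - 1)(q^2 - 2) <= s (q - 1)(q - 2) forces s >= q^2 + 3q + 5,
   as the exact quotient is q^2 + 3q + 2 + 2(q+1)/(q-2) > q^2 + 3q + 4. *)
Lemma pair_count_arith (q s : nat) : (8 <= q)%N ->
  ((q * q - 1) * (q * q - 2) <= s * ((q - 1) * (q - 2)) -> q * q + 3 * q + 5 <= s)%N.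
Proof.
move=> q_ge8; have [z ->] : exists z, q = (z + 8)%N by exists (q - 8)%N; lia.
have -> : ((z + 8) * (z + 8) - 1 = z * z + 16 * z + 63)%N by nia.
have -> : ((z + 8) * (z + 8) - 2 = z * z + 16 * z + 62)%N by nia.
have -> : (z + 8 - 1 = z + 7)%N by lia.
have -> : (z + 8 - 2 = z + 6)%N by lia.
move=> count; rewrite leqNgt; apply/negP => s_small.
have : (s * ((z + 7) * (z + 6)) <= (z * z + 19 * z + 92) * ((z + 7) * (z + 6)))%N.
  by apply: leq_mul => //; lia.
nia.
Qed.

Lemma covering_number_lower k : (3 <= k)%N ->
  (2 ^ (2 * k) + 3 * 2 ^ k + 5 <= covering_number 'F_2 (2 * k) k 2)%N.
Proof.
move=> k_ge3.
have sq : (2 ^ (2 * k) = 2 ^ k * 2 ^ k)%N by rewrite mul2n -addnn expnD.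
have q_ge8 : (8 <= 2 ^ k)%N by apply: (@leq_pexp2l 2 3 k).
apply: le_bigmin_nat => [|S covS].
  apply: leq_trans (leq_card _ (@set1_inj _)); rewrite card_mx card_Fp //.
  apply: (@leq_trans (2 ^ (2 + 2 * k))); first by rewrite expnD sq; nia.
  by apply: leq_pexp2l => //; nia.
by rewrite sq; apply: pair_count_arith => //; have := covering_pair_count covS;
  rewrite card_Fp // sq.
Qed.

Lemma ratio_near_one (R : realFieldType) (n x : R) : 0 < x ->
  x * x + 3 * x + 5 <= n -> n <= x * x + 6 * x ->
  `| n / (x * x + 3 * x + 5) - 1 | < 3 / x.
Proof.
move=> x_gt0 lo up; have c_gt0 : 0 < x * x + 3 * x + 5 by nra.
rewrite ger0_norm; last by rewrite subr_ge0 ler_pdivlMr // mul1r.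
rewrite ltrBlDr ltr_pdivrMr // mulrDl mul1r.
have -> : 3 / x * (x * x + 3 * x + 5) = 3 * x + 9 + 15 / x.
  by field; rewrite gt_eqF.
have : 0 < 15 / x by apply: divr_gt0.
lra.
Qed.

Theorem mainTheorem8 :
  (forall k : nat, (3 <= k)%N ->
     Num.ceil (gauss 2 (2 * k) 2 / gauss 2 k 2)
       = ((2 ^ (2 * k) + 3 * 2 ^ k + 5)%N)%:Z) /\
  (forall eps : rat, 0 < eps ->
     exists K : nat, forall k : nat, (K <= k)%N ->
       `| (covering_number 'F_2 (2 * k) k 2)%:R
            / (Num.ceil (gauss 2 (2 * k) 2 / gauss 2 k 2))%:~R - 1 | < eps).
Proof.
split; first exact: ceil_gauss_ratio.
move=> eps eps_gt0; exists (maxn 3 (Num.truncn (3 / eps)).+1) => k.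
rewrite geq_max => /andP [k_ge3 k_large].
rewrite ceil_gauss_ratio // -pmulrn.
have sq : (2 ^ (2 * k) = 2 ^ k * 2 ^ k)%N by rewrite mul2n -addnn expnD.
have lo := covering_number_lower k_ge3.
have up := covering_number_upper (leq_trans (isT : (1 < 3)%N) k_ge3).
have x_large : 3 / eps < (2 ^ k)%N%:R :> rat.
  apply: lt_le_trans (truncnS_gt _) _; rewrite ler_nat.
  exact: leq_trans k_large (ltnW (ltn_expl _ (isT : (1 < 2)%N))).
have x_gt0 : 0 < (2 ^ k)%N%:R :> rat by rewrite ltr0n expn_gt0.
have cast (a b : nat) : (a * a + b * a)%N%:R = a%:R * a%:R + b%:R * a%:R :> rat.
  by rewrite natrD !natrM.
rewrite -(ler_nat rat) sq natrD cast in lo.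
rewrite -(ler_nat rat) sq cast in up.
rewrite sq natrD cast.
apply: lt_trans (ratio_near_one x_gt0 lo up) _.
by rewrite ltr_pdivrMr // mulrC -ltr_pdivrMr.
Qed.
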